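(* Let $X$ be the vertex set of a connected simplicial graph with bounded geometry, equipped with the shortest path metric, which is $\delta$-hyperbolic, and fix $e\in X$ and $p\geq 1$. For $x\in X$, $k\in\mathbb{N}$, $n\in\mathbb{N}\setminus\{0\}$, let $F_{x,k,n}$ be the set of all points of $X\setminus B(e;3\delta)$ lying on $g([n,2n])$ for some geodesic $g$ from some $y$ with $d(x,y)\leq k$ to $e$ (parametrised by arc length starting at $y$), let $F(x,k,n)\in\ell^p(X)$ be its characteristic function, and set \[ H(x,n)=\frac{1}{n}\sum_{0\leq k\leq n/4}F(x,k,n). \] Then there exists a constant $C$ such that for all $R\geq 0$, all $n\geq 1$ and all $x,y\in X$ with $d(x,y)\leq R$, \[ \|H(x,n)-H(y,n)\|_p\leq 2C(R+1)\,n^{-\frac{p-1}{p}}. \]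
   Context: Bounded geometry: for every $r$ there is a uniform bound on the cardinality of balls of radius $r$. $\delta$-hyperbolicity in the Rips sense: each side of a geodesic triangle lies in the $\delta$-neighbourhood of the union of the other two. *)

From HB Require Import structures.
From mathcomp Require Import all_boot all_order all_algebra.
From mathcomp Require Import all_classical all_reals all_analysis.
Set Implicit Arguments. Unset Strict Implicit. Unset Printing Implicit Defensive.
Import Order.TTheory GRing.Theory Num.Theory.
Local Open Scope classical_set_scope.
Local Open Scope ring_scope.

Section Graph.
Variables (T : choiceType) (adj : T -> T -> Prop).

Inductive walk : T -> T -> nat -> Prop :=
| walk0 x : walk x x 0
| walkS x y z n : adj x y -> walk y z n -> walk x z n.+1.

Definition simplicial_graph : Prop :=
  (forall x y, adj x y -> adj y x) /\ (forall x, ~ adj x x).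

Definition connected_graph : Prop := forall x y, exists n, walk x y n.

Lemma walk_ex_bool x y : (exists n, walk x y n) -> exists n, `[< walk x y n >].
Proof. by move=> [n hn]; exists n; apply/asboolP. Qed.

(* shortest path distance (0 if no path; irrelevant under connectedness) *)
Definition gdist (x y : T) : nat :=
  match pselect (exists n, walk x y n) with
  | left h => ex_minn (walk_ex_bool h)
  | right _ => 0%N
  end.

Definition bounded_geometry : Prop :=
  forall r : nat, exists N : nat, forall (x : T) (s : seq T),
    uniq s -> (forall z, z \in s -> (gdist x z <= r)%N) -> (size s <= N)%N.

Definition geodesic (g : nat -> T) (L : nat) (y z : T) : Prop :=
  g 0%N = y /\ g L = z /\
  forall i j, (i <= L)%N -> (j <= L)%N -> gdist (g i) (g j) = ((i - j) + (j - i))%N.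

Definition rips_hyperbolic (R : realType) (delta : R) : Prop :=
  forall (x y z : T) (L1 L2 L3 : nat) (g1 g2 g3 : nat -> T),
    geodesic g1 L1 x y -> geodesic g2 L2 y z -> geodesic g3 L3 x z ->
    forall i, (i <= L1)%N ->
      exists j, ((j <= L2)%N /\ (gdist (g1 i) (g2 j))%:R <= delta)
             \/ ((j <= L3)%N /\ (gdist (g1 i) (g3 j))%:R <= delta).

Definition Fset (R : realType) (delta : R) (e x : T) (k n : nat) : set T :=
  [set z | ~ ((gdist e z)%:R <= 3 * delta) /\
     exists (y : T) (L : nat) (g : nat -> T) (i : nat),
       [/\ (gdist x y <= k)%N, geodesic g L y e,
           (n <= i <= 2 * n)%N, (i <= L)%N & g i = z]].

Definition Hfun (R : realType) (delta : R) (e x : T) (n : nat) : T -> R :=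
  fun z => n%:R^-1 * \sum_(0 <= k < (n %/ 4).+1) (\1_(Fset delta e x k n) z : R).

End Graph.

Definition lpnorm (R : realType) (T : choiceType) (p : R) (f : T -> R) : \bar R :=
  poweR (\esum_(z in [set: T]) ((`|f z| `^ p)%:E)) p^-1.

From HB Require Import structures.
From mathcomp Require Import all_boot all_order all_algebra.
From mathcomp Require Import all_classical all_reals all_analysis.
From mathcomp Require Import zify ring lra.
Import Order.TTheory GRing.Theory Num.Theory.
Local Open Scope classical_set_scope.
Set Implicit Arguments. Unset Strict Implicit. Unset Printing Implicit Defensive.

(* Moving the base point from y to x maps F(y,k,n) into F(x, k + d(x,y), n), so
   shifting the summation index shows |H(x,n) - H(y,n)| <= d(x,y)/n pointwise.
   Both functions vanish outside F(., n/4, n), which has O(n) points: a point at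
   distance i in [n, 2n] from y' along a geodesic [y', e] is, by thinness of the
   triangle (y', e, x), delta-close to the side [e, x] at distance O(n) from x
   (the side [y', x] has length <= n/4 and is too short), and bounded geometry
   bounds the number of points in each delta-ball.  Summing |H(x,n) - H(y,n)|^p
   over these O(n) points gives the l^p bound (C n)^(1/p) R / n. *)

Section GraphDistance.
Variables (T : choiceType) (adj : T -> T -> Prop).
Hypothesis adj_sym : forall x y, adj x y -> adj y x.
Hypothesis adj_conn : connected_graph adj.

Local Notation d := (gdist adj).

Lemma walk_cat x y z a b : walk adj x y a -> walk adj y z b -> walk adj x z (a + b).
Proof. by elim=> [//|u v w n huv _ IH] /IH; rewrite addSn; apply: walkS. Qed.

Lemma walk_rev x y n : walk adj x y n -> walk adj y x n.
Proof.
elim=> [u|u v w k huv _ IH]; first exact: walk0.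
by rewrite -addn1; apply: walk_cat IH (walkS (adj_sym huv) (walk0 adj u)).
Qed.

Lemma gdist_walk x y : walk adj x y (d x y).
Proof.
rewrite /gdist; case: pselect => [h|h]; last by case: h; apply: adj_conn.
by case: ex_minnP => m /asboolP.
Qed.

Lemma gdist_min x y m : walk adj x y m -> (d x y <= m)%N.
Proof.
rewrite /gdist; case: pselect => [h|h] hm; last by case: h; exists m.
by case: ex_minnP => k _; apply; apply/asboolP.
Qed.

Lemma gdist_xx x : d x x = 0%N.
Proof. by apply/eqP; rewrite -leqn0; apply/gdist_min/walk0. Qed.

Lemma gdist_eq0 x y : d x y = 0%N -> x = y.
Proof. by move=> dxy; have := gdist_walk x y; rewrite dxy => h; inversion h. Qed.

Lemma gdist_adj x y : adj x y -> (d x y <= 1)%N.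
Proof. by move=> h; apply/gdist_min/(walkS h)/walk0. Qed.

Lemma gdist_triangle x y z : (d x z <= d x y + d y z)%N.
Proof. by apply/gdist_min/walk_cat; apply: gdist_walk. Qed.

Lemma gdist_sym x y : d x y = d y x.
Proof. by apply/eqP; rewrite eqn_leq !gdist_min //; apply/walk_rev/gdist_walk. Qed.

Lemma gdist_step x y : (0 < d x y)%N -> exists2 w, adj x w & d w y = (d x y).-1.
Proof.
have := gdist_walk x y; case E: (d x y) => [//|k] h _.
inversion h as [|? w ? ? hxw hwy]; subst; exists w => //.
have := gdist_min hwy; have := gdist_triangle x w y; have := gdist_adj hxw.
by rewrite E /=; lia.
Qed.

Lemma geodesic_of_descent (g : nat -> T) (L : nat) (a b : T) :
  g 0%N = a -> (forall i, (i <= L)%N -> d (g i) b = (L - i)%N) ->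
  (forall i, (i < L)%N -> (d (g i) (g i.+1) <= 1)%N) -> geodesic adj g L a b.
Proof.
move=> g0 dgb dstep.
have dfwd i k : (i + k <= L)%N -> d (g i) (g (i + k)) = k.
  move=> hik; apply/eqP; rewrite eqn_leq; apply/andP; split.
    elim: k hik => [|k IH] hik; first by rewrite addn0 gdist_xx.
    have := gdist_triangle (g i) (g (i + k)) (g (i + k).+1).
    by rewrite addnS; have := IH ltac:(lia); have := dstep (i + k)%N ltac:(lia); lia.
  by have := gdist_triangle (g i) (g (i + k)) b; rewrite !dgb //; lia.
split=> //; split; first by apply: gdist_eq0; rewrite dgb // subnn.
move=> i j hi hj; case: (leqP i j) => hij.
  by rewrite -(subnKC hij) dfwd subnKC //; lia.
by rewrite gdist_sym -(subnKC (ltnW hij)) dfwd subnKC //; lia.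
Qed.

Lemma geodesic_exists a b : exists g, geodesic adj g (d a b) a b.
Proof.
have /choice[next hnext] : forall u, exists w,
    (0 < d u b)%N -> adj u w /\ d w b = (d u b).-1.
  move=> u; case: (ltnP 0 (d u b)) => hu; last by exists u => ?; lia.
  by have [w] := gdist_step hu; exists w.
pose g i := iter i next a.
have dgb i : (i <= d a b)%N -> d (g i) b = (d a b - i)%N.
  elim: i => [|i IH] hi; first by rewrite subn0.
  by rewrite /g iterS (hnext _ _).2 -/(g i) IH; lia.
exists g; apply: geodesic_of_descent => // i hi.
by rewrite /g iterS; apply/gdist_adj/(hnext _ _).1; rewrite -/(g i) dgb; lia.
Qed.

Section Geodesic.
Variables (g : nat -> T) (L : nat) (y z : T).
Hypothesis geod : geodesic adj g L y z.

Lemma geodesic_gdist : d y z = L.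
Proof. by case: geod => [<- [<- h]]; rewrite h //; lia. Qed.

Lemma geodesic_gdist_start i : (i <= L)%N -> d y (g i) = i.
Proof. by case: geod => [<- [_ h]] hi; rewrite h //; lia. Qed.

Lemma geodesic_gdist_end i : (i <= L)%N -> d (g i) z = (L - i)%N.
Proof. by case: geod => [_ [<- h]] hi; rewrite h //; lia. Qed.

End Geodesic.

End GraphDistance.

Lemma uniq_cover_size_le (T : eqType) (Q : nat -> T -> Prop) (N : nat) :
  (forall m (s : seq T), uniq s -> (forall z, z \in s -> Q m z) -> (size s <= N)%N) ->
  forall K (s : seq T), uniq s ->
    (forall z, z \in s -> exists2 m, (m < K)%N & Q m z) -> (size s <= K * N)%N.
Proof.
move=> hN; elim=> [|K IH] s us hs.
  by case: s us hs => [//|z s] _ /(_ z (mem_head _ _))[].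
rewrite -(count_predC (fun z => `[< Q K z >]) s) mulSn -!size_filter.
apply: leq_add.
  apply: (hN K) (filter_uniq _ us) _ => z.
  by rewrite mem_filter => /andP[Qz _]; apply/asboolP.
apply: IH (filter_uniq _ us) _ => z.
rewrite mem_filter => /andP[/= hQ /hs[m hm Qm]].
exists m => //; move: hm; rewrite ltnS leq_eqVlt => /orP[/eqP em|//].
by move: hQ Qm; rewrite em => /asboolPn.
Qed.

Lemma sum_indicator_shift (P Q : nat -> bool) (A D : nat) :
  (forall k, P k -> Q (k + D)%N) ->
  (\sum_(0 <= k < A) P k <= \sum_(0 <= k < A) Q k + D)%N.
Proof.
move=> PQ.
have shifted : (\sum_(0 <= k < A) P k + \sum_(0 <= k < D) Q k <= \sum_(0 <= k < A + D) Q k)%N.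
  elim: A => [|A IH]; first by rewrite big_geq // add0n.
  rewrite addSn !big_nat_recr //=.
  have PQA : (P A <= Q (A + D))%N by case: (P A) (PQ A) => // ->.
  lia.
have tail : (\sum_(0 <= k < A + D) Q k <= \sum_(0 <= k < A) Q k + D)%N.
  elim: D {shifted PQ} => [|D IH]; first by rewrite !addn0.
  by rewrite addnS big_nat_recr //=; have := leq_b1 (Q (A + D)%N); lia.
lia.
Qed.

Local Open Scope ring_scope.

Section HyperbolicGraph.
Variables (R : realType) (T : choiceType) (adj : T -> T -> Prop) (delta : R) (e : T).
Hypothesis adj_sym : forall x y, adj x y -> adj y x.
Hypothesis adj_conn : connected_graph adj.
Hypothesis adj_bounded : bounded_geometry adj.
Hypothesis hyperbolic : rips_hyperbolic adj delta.

Local Notation d := (gdist adj).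
Local Notation F := (Fset adj delta e).
Local Notation H := (Hfun adj delta e).

Lemma FsetS x k k' n : (k <= k')%N -> F x k n `<=` F x k' n.
Proof.
move=> kk' z [ze [y [L [g [i [xy geod hi iL gi]]]]]]; split=> //.
by exists y, L, g, i; split=> //; apply: leq_trans kk'.
Qed.

Lemma Fset_gdist_shift x y k n : F y k n `<=` F x (k + d x y) n.
Proof.
move=> z [ze [y' [L [g [i [yy' geod hi iL gi]]]]]]; split=> //.
by exists y', L, g, i; split=> //; have := gdist_triangle adj_conn x y y'; lia.
Qed.

Lemma Fset_gdist_le x k n z : F x k n z -> (d x z <= k + 2 * n)%N.
Proof.
move=> [_ [y [L [g [i [xy geod /andP[_ hi] iL <-]]]]]].
by have := gdist_triangle adj_conn x y (g i); rewrite (geodesic_gdist_start geod iL); lia.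
Qed.

Lemma Hfun_natE x n z :
  H x n z = n%:R^-1 * (\sum_(0 <= k < (n %/ 4).+1) (z \in F x k n : nat))%:R.
Proof. by rewrite /Hfun natr_sum. Qed.

Lemma Hfun_eq0 x n z : ~ F x (n %/ 4) n z -> H x n z = 0.
Proof.
move=> Fz; rewrite Hfun_natE big_nat big1 ?mulr0 // => k /andP[_ hk].
apply/eqP; rewrite eqb0; apply/negP; rewrite in_setE => Fkz.
by apply: Fz; apply: FsetS Fkz; lia.
Qed.

Lemma Hfun_dist_le x y n z : `|H x n z - H y n z| <= (d x y)%:R / n%:R.
Proof.
rewrite !Hfun_natE -mulrBr normrM normfV normr_nat mulrC; apply: ler_wpM2r => //.
have shift u v : (\sum_(0 <= k < (n %/ 4).+1) (z \in F v k n : nat) <=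
    \sum_(0 <= k < (n %/ 4).+1) (z \in F u k n : nat) + d u v)%N.
  by apply: sum_indicator_shift => k; rewrite !in_setE; apply: Fset_gdist_shift.
have := shift x y; have := shift y x; rewrite (gdist_sym adj_sym adj_conn y x).
rewrite -!(ler_nat R) !natrD => hyx hxy.
by rewrite ler_norml; apply/andP; split; lra.
Qed.

Lemma Fset_near_geodesic (dd : nat) (g : nat -> T) (L : nat) x k n z :
  delta <= dd%:R -> geodesic adj g L e x -> (k + dd < n)%N -> F x k n z ->
  exists2 m, (m <= k + 2 * n + dd)%N & (d (g (L - m)) z <= dd)%N.
Proof.
move=> delta_dd geod kn [_ [y [M [h [i [xy geodh /andP[ni i2n] iM <-]]]]]].
have [h' geodh'] := geodesic_exists adj_sym adj_conn y x.
have dyhi := geodesic_gdist_start geodh iM.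
have dtri := gdist_triangle adj_conn.
have dsym := gdist_sym adj_sym adj_conn.
have [j [[jL close]|[jM' close]]] := hyperbolic geodh geod geodh' iM.
  have {}close : (d (h i) (g j) <= dd)%N by rewrite -(ler_nat R); apply: le_trans close _.
  exists (L - j)%N; last by rewrite subKn // dsym.
  have := geodesic_gdist_end geod jL; have := dtri (g j) (h i) x; have := dtri (h i) y x.
  by have := dsym (g j) (h i); have := dsym (h i) y; have := dsym y x; lia.
(* The side [y, x] has length d(x, y) <= k, too short to come dd-close to h i. *)
have {}close : (d (h i) (h' j) <= dd)%N by rewrite -(ler_nat R); apply: le_trans close _.
have := geodesic_gdist_start geodh' jM'; have := geodesic_gdist geodh'.
have := dtri y (h' j) (h i); have := dsym (h i) (h' j); have := dsym y x.
lia.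
Qed.

Lemma Fset_size_le : exists C : nat, forall x n (s : seq T), (1 <= n)%N -> uniq s ->
  (forall z, z \in s -> F x (n %/ 4) n z) -> (size s <= C * n)%N.
Proof.
have [dd delta_dd] : exists dd : nat, delta <= dd%:R.
  by exists (Num.bound `|delta|); apply/ltW/(le_lt_trans (ler_norm delta))/archi_boundP.
have [Nd ball_dd] := adj_bounded dd.
have [N6 ball_6dd] := adj_bounded (6 * dd).
exists ((4 + dd) * Nd + N6)%N => x n s n1 us sF.
have [n_small|n_large] := leqP n (2 * dd).
  apply: (@leq_trans N6); last by apply: leq_trans (leq_addl _ _) (leq_pmulr _ n1).
  by apply: (ball_6dd x) => // z /sF/Fset_gdist_le; lia.
have [g geod] := geodesic_exists adj_sym adj_conn e x.
apply: (@leq_trans ((n %/ 4 + 2 * n + dd).+1 * Nd)); last by nia.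
apply: (uniq_cover_size_le (Q := fun m z => (d (g (d e x - m)) z <= dd)%N)) => //.
  by move=> m; apply: ball_dd.
move=> z /sF/(Fset_near_geodesic delta_dd geod)[|m hm close]; first by lia.
by exists m.
Qed.

Lemma Hfun_diff_support_size_le : exists C : nat, forall x y n (s : seq T),
  (1 <= n)%N -> uniq s -> (forall z, z \in s -> H x n z - H y n z != 0) ->
  (size s <= C * n)%N.
Proof.
have [C FC] := Fset_size_le.
exists (2 * C)%N => x y n s n1 us sH; rewrite -mulnA.
pose Q m := F (if m == 0%N then x else y) (n %/ 4) n.
apply: (uniq_cover_size_le (Q := Q)) => // [m s' us' s'Q|z /sH].
  exact: FC n1 us' s'Q.
have [Fx|Fx] := pselect (F x (n %/ 4) n z); first by exists 0%N.
have [Fy|Fy] := pselect (F y (n %/ 4) n z); first by exists 1%N.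
by rewrite (Hfun_eq0 Fx) (Hfun_eq0 Fy) subrr eqxx.
Qed.

End HyperbolicGraph.

Lemma esum_powR_le (R : realType) (T : choiceType) (f : T -> R) (p a : R) (N : nat) :
  0 < p -> 0 <= a -> (forall z, `|f z| <= a) ->
  (forall s : seq T, uniq s -> (forall z, z \in s -> f z != 0) -> (size s <= N)%N) ->
  (\esum_(z in [set: T]) (`|f z| `^ p)%:E <= (N%:R * a `^ p)%:E)%E.
Proof.
move=> p0 a0 fa supportN; apply: ge_ereal_sup => _ [A [finA _] <-].
rewrite fsbig_finite //= sumEFin lee_fin (bigID (fun z => f z != 0)) /=.
rewrite [X in _ + X]big1 => [|z /negPn/eqP ->]; last by rewrite normr0 powR0 ?gt_eqF.
set s := finmap.enum_fset _; rewrite addr0.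
apply: (@le_trans _ _ (\sum_(z <- s | f z != 0) a `^ p)).
  by apply: ler_sum => z _; apply: ge0_ler_powR => //; apply: ltW.
rewrite big_const_seq iter_addr_0 mulr_natl; apply: ler_wpMn2l; first exact: powR_ge0.
rewrite -size_filter; apply: supportN => [|z]; last by rewrite mem_filter => /andP[].
exact/filter_uniq/finmap.fset_uniq.
Qed.

Lemma lpnorm_le_support (R : realType) (T : choiceType) (f : T -> R) (p a : R) (N : nat) :
  0 < p -> 0 <= a -> (forall z, `|f z| <= a) ->
  (forall s : seq T, uniq s -> (forall z, z \in s -> f z != 0) -> (size s <= N)%N) ->
  (lpnorm p f <= (N%:R `^ p^-1 * a)%:E)%E.
Proof.
move=> p0 a0 fa supportN.
have pV0 : 0 <= p^-1 by rewrite invr_ge0; apply: ltW.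
apply: le_trans (gt0_ler_poweR pV0 _ _ (esum_powR_le p0 a0 fa supportN)) _.
- by rewrite in_itv /= leey andbT; apply: esum_ge0 => z _; rewrite lee_fin powR_ge0.
- by rewrite in_itv /= leey andbT lee_fin mulr_ge0 ?powR_ge0.
rewrite poweR_EFin lee_fin powRM ?powR_ge0 // -powRrM mulfV ?gt_eqF // powRr1 //.
Qed.

Lemma powR_inv_mul_div_le (R : realType) (X m r p : R) :
  1 <= X -> 0 < m -> 0 <= r -> 1 <= p ->
  (X * m) `^ p^-1 * (r / m) <= X * r * m `^ (- ((p - 1) / p)).
Proof.
move=> X1 m0 r0 p1; have p0 : 0 < p by apply: lt_le_trans p1.
have X0 : 0 <= X by apply: le_trans X1.
have -> : - ((p - 1) / p) = p^-1 - 1 by field; rewrite gt_eqF.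
rewrite powRB; last by rewrite (gt_eqF m0) implybT.
rewrite (powRr1 (ltW m0)) (powRM _ X0 (ltW m0)).
have XV : X `^ p^-1 <= X.
  by rewrite -{2}(powRr1 X0); apply: ler_powR => //; rewrite invf_le1.
have -> : X `^ p^-1 * m `^ p^-1 * (r / m) = X `^ p^-1 * r * (m `^ p^-1 / m) by ring.
by apply: ler_wpM2r; [rewrite divr_ge0 ?powR_ge0 ?(ltW m0) | apply: ler_wpM2r].
Qed.

Theorem lemma3p4 (R : realType) (T : choiceType) (adj : T -> T -> Prop)
    (delta : R) (e : T) (p : R) :
  simplicial_graph adj -> connected_graph adj -> bounded_geometry adj ->
  0 <= delta -> rips_hyperbolic adj delta -> 1 <= p ->
  exists C : R, forall (r : R) (n : nat) (x y : T),
    0 <= r -> (1 <= n)%N -> (gdist adj x y)%:R <= r ->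
    (lpnorm p (fun z => (Hfun adj delta e x n z - Hfun adj delta e y n z)%R)
      <= (2 * C * (r + 1) * (n%:R `^ (- ((p - 1) / p))))%:E)%E.
Proof.
move=> [adj_sym _] adj_conn adj_bounded _ hyperbolic p1.
have [C support_le] := Hfun_diff_support_size_le e adj_sym adj_conn adj_bounded hyperbolic.
exists C.+1%:R => r n x y r0 n1 dxy.
have n0 : 0 < n%:R :> R by rewrite ltr0n.
have p0 : 0 < p by apply: lt_le_trans p1.
apply: le_trans (lpnorm_le_support (a := r / n%:R) (N := (2 * C.+1 * n)%N) p0 _ _ _) _.
- by rewrite divr_ge0 ?ler0n.
- move=> z; apply: le_trans (Hfun_dist_le delta e adj_sym adj_conn x y n z) _.
  by apply: ler_wpM2r; rewrite ?invr_ge0 ?ler0n.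
- move=> s us sH; apply: leq_trans (support_le x y n s n1 us sH) _.
  by apply: leq_mul => //; lia.
rewrite lee_fin natrM.
apply: le_trans (powR_inv_mul_div_le _ n0 r0 p1) _; first by rewrite ler1n muln_gt0.
rewrite natrM; apply: ler_wpM2r; first exact: powR_ge0.
by apply: ler_wpM2l; rewrite ?mulr_ge0 ?ler0n ?lerDl.
Qed.
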